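(* If $G$ is a simple graph of order $n\geq 3$ with minimum degree $\delta(G)\geq \frac{n}{2}$, then $px_k(G)=2$ for each integer $k$ with $3\leq k\leq n$.
   Context: All graphs are finite, simple, undirected and connected. An edge-coloring of a graph assigns a color to each edge (adjacent edges may receive the same color). A tree in an edge-colored graph is proper if any two adjacent edges of the tree receive different colors. For $S\subseteq V(G)$, an $S$-tree is a subgraph of $G$ that is a tree containing all vertices of $S$. For a connected graph $G$ of order $n$ and an integer $k$ with $2\le k\le n$, an edge-coloring of $G$ is a $k$-proper coloring if for every set $S$ of $k$ vertices of $G$ there exists a proper $S$-tree in $G$. The $k$-proper index $px_k(G)$ is the minimum number of colors used in a $k$-proper coloring of $G$. *)

From mathcomp Require Import all_boot.
Set Implicit Arguments. Unset Strict Implicit. Unset Printing Implicit Defensive.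

(* A simple graph is a symmetric irreflexive relation e on a finite type T;
   its edges are the 2-element sets [set x; y] with e x y. *)

Section ProperIndex.
Variable T : finType.
Variable e : rel T.

Definition simple_graph := symmetric e /\ irreflexive e.
Definition graph_connected := forall x y : T, connect e x y.
Definition degree (v : T) := #|[set u | e v u]|.

Definition adjF (F : {set {set T}}) : rel T := [rel a b | [set a; b] \in F].

Definition is_subtree (V : {set T}) (F : {set {set T}}) : Prop :=
  [/\ V != set0,
      (forall f, f \in F -> exists x y, [/\ e x y, x \in V, y \in V & f = [set x; y]]),
      (forall x y, x \in V -> y \in V -> connect (adjF F) x y) &
      (forall s : seq T, uniq s -> 2 < size s -> ~~ cycle (adjF F) s)].

Definition edge_coloring (m : nat) (c : T -> T -> 'I_m) : Prop :=
  forall x y, c x y = c y x.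

Definition proper_tree (m : nat) (c : T -> T -> 'I_m) (F : {set {set T}}) : Prop :=
  forall x y z, x != z -> [set x; y] \in F -> [set y; z] \in F -> c x y != c y z.

Definition k_proper_coloring (k m : nat) (c : T -> T -> 'I_m) : Prop :=
  forall S : {set T}, #|S| = k ->
    exists (V : {set T}) (F : {set {set T}}),
      [/\ S \subset V, is_subtree V F & proper_tree c F].

Definition proper_index_is (k m : nat) : Prop :=
  (exists c : T -> T -> 'I_m, edge_coloring c /\ k_proper_coloring k c) /\
  (forall m', m' < m -> forall c : T -> T -> 'I_m',
      edge_coloring c -> ~ k_proper_coloring k c).

End ProperIndex.

From mathcomp Require Import all_boot zify.
Set Implicit Arguments. Unset Strict Implicit. Unset Printing Implicit Defensive.

(* Dirac's argument gives a Hamiltonian path: a path x = v_0, ..., v_m = l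
   that cannot be extended at either end has all neighbours of x and of l on
   it, so since deg x + deg l >= n > m there is an i with x ~ v_(i+1) and
   v_i ~ l; this closes the vertices of the path into a cycle, and an edge
   leaving the cycle (by connectivity) yields a longer path.  Colouring the
   Hamiltonian path alternately gives a proper spanning tree with 2 colours.
   Conversely, in a tree with one colour no two edges meet, so it spans at
   most 2 vertices and cannot contain k >= 3 given vertices. *)

Lemma exists_card_set (T : finType) k : k <= #|T| -> exists S : {set T}, #|S| = k.
Proof.
move=> kT; exists [set x in take k (enum T)].
by rewrite cardsE (card_uniqP (take_uniq _ (enum_uniq _))) size_takel // -cardE.
Qed.

Lemma card_le_preim (I T : finType) (f : I -> T) (A : {set T}) :
  {subset A <= codom f} -> #|A| <= #|[set i | f i \in A]|.
Proof.
move=> Af; apply: leq_trans (leq_imset_card f _); apply: subset_leq_card.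
apply/subsetP => u uA; have /codomP[i fi] := Af u uA.
by rewrite fi; apply: imset_f; rewrite inE -fi.
Qed.

Lemma connect_exit (T : finType) (r : rel T) (A : {pred T}) a z :
  a \in A -> z \notin A -> connect r a z ->
  exists v w, [/\ r v w, v \in A & w \notin A].
Proof.
move=> aA zA /connectP[q]; elim: q a aA => [|b q IH] a aA /=.
  by move=> _ za; rewrite za aA in zA.
case/andP=> ab bq zq; have [bA|bA] := boolP (b \in A); first exact: IH bA bq zq.
by exists a, b.
Qed.

Lemma connect_no_two_step (T : finType) (r : rel T) :
  (forall x y z, r x y -> r y z -> x = z) ->
  forall a d, connect r a d -> a = d \/ r a d.
Proof.
move=> r2 a d /connectP[q]; elim: q a => [|b q IH] a /=; first by left.
by move=> /andP[ab /IH{}IH] /IH[<-|bd]; [right | left; exact: r2 ab bd].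
Qed.

Section HamiltonianPath.
Variables (T : finType) (e : rel T).
Hypotheses (e_sym : symmetric e) (e_irr : irreflexive e).

Lemma cycle_cat_rev x p y q :
  path e x p -> path e y q -> e x y -> e (last x p) (last y q) ->
  cycle e (x :: p ++ rev (y :: q)).
Proof.
move=> xp yq xy pq; rewrite /= rcons_cat cat_path xp /=.
rewrite (lastI y q) rev_rcons rcons_cons /= rcons_path pq rev_path.
have -> : last (last y q) (rev (belast y q)) = y.
  by case: q {yq pq} => //= z q; rewrite rev_cons last_rcons.
by rewrite e_sym xy andbT; apply: sub_path yq => a b; rewrite e_sym.
Qed.

Lemma cycle_exit_path c v w :
  cycle e c -> uniq c -> v \in c -> w \notin c -> e v w ->
  exists q, [/\ path e w q, uniq (w :: q) & size q = size c].
Proof.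
move=> cc uc vc wc vw; have [j s Ec] := rot_to vc.
have vs : cycle e (v :: s) by rewrite -Ec rot_cycle.
exists (v :: s); split; last by rewrite -Ec size_rot.
  by rewrite /= e_sym vw; move: vs; rewrite /= rcons_path => /andP[].
by rewrite -Ec /= mem_rot wc rot_uniq.
Qed.

Hypothesis dirac : forall v, #|T| <= 2 * degree e v.

Lemma crossing_split x p :
  uniq (x :: p) -> size (x :: p) < #|T| ->
  {subset e x <= x :: p} -> {subset e (last x p) <= x :: p} ->
  exists p1 y q, [/\ p = p1 ++ y :: q, e x y & e (last x p1) (last x p)].
Proof.
move=> up small xN lN; set m := size p; set l := last x p.
pose I := [set i : 'I_m | nth x p i \in [set u | e x u]].
pose J := [set i : 'I_m | nth x (x :: p) i \in [set u | e l u]].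
have cardI : degree e x <= #|I|.
  apply: card_le_preim => u; rewrite inE => xu.
  have := xN u xu; rewrite inE => /predU1P[eux|up'].
    by rewrite eux e_irr in xu.
  have um : index u p < m by rewrite index_mem.
  by apply/codomP; exists (Ordinal um) => /=; rewrite nth_index.
have cardJ : degree e l <= #|J|.
  apply: card_le_preim => u; rewrite inE => lu.
  have us := lN u lu; have ul : u != l by apply: contraTneq lu => ->; rewrite e_irr.
  have um : index u (x :: p) < m.
    have : index u (x :: p) < m.+1 by rewrite -[m.+1]/(size (x :: p)) index_mem.
    rewrite ltnS leq_eqVlt => /predU1P[ei|//].
    by move: ul; rewrite /l (last_nth x) -/m -ei nth_index // eqxx.
  by apply/codomP; exists (Ordinal um) => /=; rewrite nth_index.
have /card_gt0P[i] : 0 < #|I :&: J|.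
  have := cardsUI I J; have := max_card (I :|: J); rewrite card_ord.
  have := dirac x; have := dirac l; move: small cardI cardJ; rewrite /= -/m; lia.
rewrite !inE => /andP[xi li].
exists (take i p), (nth x p i), (drop i.+1 p); split => //.
- by rewrite -drop_nth // cat_take_drop.
- rewrite e_sym (last_nth x) size_take ltn_ord.
  by rewrite -[x :: take i p]/(take i.+1 (x :: p)) nth_take.
Qed.

Hypothesis e_conn : forall x y, connect e x y.

Lemma path_extend x p :
  path e x p -> uniq (x :: p) -> size (x :: p) < #|T| ->
  exists y q, [/\ path e y q, uniq (y :: q) & size p < size q].
Proof.
move=> xp up small.
have [u /andP[xu un] | xN] := pickP [pred u | e x u & u \notin x :: p].
  by exists u, (x :: p); rewrite [path _ _ _]/= e_sym xu xp cons_uniq un up.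
have [u /andP[lu un] | lN] := pickP [pred u | e (last x p) u & u \notin x :: p].
  exists x, (rcons p u); rewrite rcons_path xp lu -rcons_cons rcons_uniq un up.
  by rewrite size_rcons.
have closed a : (forall u, (e a u && (u \notin x :: p)) = false) ->
    {subset e a <= x :: p}.
  by move=> aN u au; move: (aN u); rewrite [e a u]au => /negbFE.
have [p1 [y [q [Ep xy ly]]]] := crossing_split up small (closed _ xN) (closed _ lN).
pose c := x :: p1 ++ rev (y :: q).
have cc : cycle e c.
  move: xp ly; rewrite Ep cat_path last_cat /= => /andP[xp1 /andP[_ yq]] ly.
  exact: cycle_cat_rev.
have pc : perm_eq c (x :: p) by rewrite Ep perm_cons perm_cat2l perm_rev.
have [z zc] : exists z, z \notin c.
  case: (pickP [predC c]) => [z /= zc | allc]; first by exists z.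
  have := uniq_leq_size (enum_uniq T) (s2 := c) (fun z _ => negbFE (allc z)).
  by rewrite -cardE (perm_size pc) => /leq_ltn_trans/(_ small); rewrite ltnn.
have [v [w [vw vc wc]]] := connect_exit (mem_head x _) zc (e_conn x z).
have [q' [wq uq sq]] := cycle_exit_path cc (etrans (perm_uniq pc) up) vc wc vw.
by exists w, q'; rewrite sq (perm_size pc).
Qed.

Lemma hamiltonian_path (x0 : T) :
  exists x p, [/\ path e x p, uniq (x :: p) & forall v, v \in x :: p].
Proof.
have grow n : n <= #|T| ->
    exists x p, [/\ path e x p, uniq (x :: p) & n <= size (x :: p)].
  elim: n => [|n IH] nT; first by exists x0, [::].
  have [x [p [xp up np]]] := IH (ltnW nT).
  have [lt_np|le_pn] := ltnP n (size (x :: p)); first by exists x, p.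
  have [y [q [yq uq pq]]] := path_extend xp up (leq_ltn_trans le_pn nT).
  by exists y, q; split => //; move: np pq => /=; lia.
have [x [p [xp up full]]] := grow _ (leqnn #|T|).
exists x, p; split => // v.
have [|_ ->] := uniq_min_size up (s2 := enum T) (fun u _ => mem_enum T u).
  by rewrite -cardE.
by rewrite mem_enum.
Qed.

End HamiltonianPath.

Lemma inord_odd_succ_neq n : (inord (odd n.+1) : 'I_2) != inord (odd n).
Proof. by rewrite -(inj_eq val_inj) /= !inordK; case: odd. Qed.

Section HamiltonianPathColoring.
Variables (T : finType) (e : rel T) (x0 : T) (p : seq T).
Hypothesis x0p_cover : forall v, v \in x0 :: p.

Definition pos v := index v (x0 :: p).

Definition parity_coloring (a b : T) : 'I_2 := inord (odd (minn (pos a) (pos b))).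

Definition path_edges : {set {set T}} :=
  [set E | [exists a, exists b, (E == [set a; b]) && (pos b == (pos a).+1)]].

Lemma pos_inj : injective pos.
Proof.
by move=> a b eq_ab; rewrite -(nth_index x0 (x0p_cover a)) -/(pos a) eq_ab nth_index.
Qed.

Lemma pos_lt v : pos v < size (x0 :: p).
Proof. by rewrite /pos index_mem. Qed.

Lemma pos_set2 u a b : u \in [set a; b] -> pos u = pos a \/ pos u = pos b.
Proof. by rewrite !inE => /orP[]/eqP->; auto. Qed.

Lemma path_edges_pos a b :
  [set a; b] \in path_edges -> pos b = (pos a).+1 \/ pos a = (pos b).+1.
Proof.
rewrite inE => /existsP[a' /existsP[b' /andP[/eqP E /eqP h]]].
have a_in : a \in [set a'; b'] by rewrite -E set21.
have b_in : b \in [set a'; b'] by rewrite -E set22.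
have a'_in : a' \in [set a; b] by rewrite E set21.
have b'_in : b' \in [set a; b] by rewrite E set22.
move: (pos_set2 a_in) (pos_set2 b_in) (pos_set2 a'_in) (pos_set2 b'_in); lia.
Qed.

Lemma path_edges_step a b : pos b = (pos a).+1 -> [set a; b] \in path_edges.
Proof.
move=> h; rewrite inE; apply/existsP; exists a; apply/existsP; exists b.
by rewrite eqxx h eqxx.
Qed.

Lemma parity_coloring_sym : edge_coloring parity_coloring.
Proof. by move=> a b; rewrite /parity_coloring minnC. Qed.

Lemma parity_coloring_proper : proper_tree parity_coloring path_edges.
Proof.
move=> x y z xz /path_edges_pos xy /path_edges_pos yz.
have pxz : pos x <> pos z by move/pos_inj => exz; rewrite exz eqxx in xz.
rewrite /parity_coloring.
have [-> | ->] : minn (pos y) (pos z) = (minn (pos x) (pos y)).+1 \/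
                 minn (pos x) (pos y) = (minn (pos y) (pos z)).+1 by lia.
  by rewrite eq_sym inord_odd_succ_neq.
exact: inord_odd_succ_neq.
Qed.

Hypotheses (x0p : path e x0 p) (x0p_uniq : uniq (x0 :: p)).

Lemma path_edges_in_graph f : f \in path_edges ->
  exists a b, [/\ e a b, a \in [set: T], b \in [set: T] & f = [set a; b]].
Proof.
rewrite inE => /existsP[a /existsP[b /andP[/eqP -> /eqP h]]].
exists a, b; split; rewrite ?inE //.
have hb := pos_lt b; rewrite h /= ltnS in hb.
have -> : b = nth x0 p (pos a).
  by rewrite -[nth _ _ _]/(nth x0 (x0 :: p) (pos a).+1) -h nth_index.
by move/pathP: x0p => /(_ x0 _ hb); rewrite nth_index.
Qed.

Lemma path_edges_connect v : connect (adjF path_edges) x0 v.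
Proof.
have reach i : i < size (x0 :: p) ->
    connect (adjF path_edges) x0 (nth x0 (x0 :: p) i).
  elim: i => [|i IH] lt_i; first exact: connect0.
  apply: connect_trans (IH (ltnW lt_i)) (connect1 _); apply: path_edges_step.
  by rewrite /pos !index_uniq // ltnW.
by rewrite -(nth_index x0 (x0p_cover v)); apply/reach/pos_lt.
Qed.

Lemma path_edges_acyclic s : uniq s -> 2 < size s -> ~~ cycle (adjF path_edges) s.
Proof.
case: s => [|t0 t] // us s2; apply/negP => cs.
have [y ys ymax] := @arg_maxnP T t0 (mem (t0 :: t)) pos (mem_head _ _).
have [k s' Es] := rot_to ys.
move: us s2 cs; rewrite -(rot_uniq k) -(size_rot k) -(rot_cycle k) Es.
case: s' Es => [|a [|b0 u]] // Es us _ /=; rewrite rcons_path => /and3P[ya _ /=].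
case/andP=> _; set b := last b0 u => by_.
have mem_s v : v \in y :: a :: b0 :: u -> v \in t0 :: t by rewrite -Es mem_rot.
have ab : a != b.
  by move: us => /and3P[_ + _]; apply: contraNneq => ->; rewrite mem_last.
have ha : pos a <= pos y by apply/ymax/mem_s; rewrite !inE eqxx orbT.
have hb : pos b <= pos y by apply/ymax/mem_s; rewrite 2!in_cons mem_last !orbT.
move: (path_edges_pos ya) (path_edges_pos by_) => h1 h2.
have /pos_inj eq_ab : pos a = pos b by lia.
by rewrite eq_ab eqxx in ab.
Qed.

Lemma path_edges_tree : is_subtree e [set: T] path_edges.
Proof.
split; first by apply/set0Pn; exists x0; rewrite inE.
- exact: path_edges_in_graph.
- move=> a b _ _; apply: connect_trans (path_edges_connect b).
  rewrite (sym_connect_sym (_ : symmetric (adjF path_edges))) ?path_edges_connect //.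
  by move=> u v; rewrite /adjF /= setUC.
- exact: path_edges_acyclic.
Qed.
End HamiltonianPathColoring.

Lemma one_color_subtree_small (T : finType) (e : rel T) (V : {set T})
    (F : {set {set T}}) (c : T -> T -> 'I_1) :
  is_subtree e V F -> proper_tree c F -> #|V| <= 2.
Proof.
move=> [_ _ V_conn _] c_proper; rewrite leqNgt; apply/card_gt2P.
move=> [a [b [d [[aV bV dV] [ab bd da]]]]].
have no_two_step x y z : adjF F x y -> adjF F y z -> x = z.
  move=> xy yz; have [//|xz] := eqVneq x z.
  by move: (c_proper _ _ _ xz xy yz); rewrite (ord1 (c x y)) (ord1 (c y z)) eqxx.
have [eq_ab|adj_ab] := connect_no_two_step no_two_step (V_conn a b aV bV).
  by rewrite eq_ab eqxx in ab.
have [eq_ad|adj_ad] := connect_no_two_step no_two_step (V_conn a d aV dV).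
  by rewrite eq_ad eqxx in da.
have adj_ba : adjF F b a by rewrite /adjF /= setUC.
by move: bd; rewrite (no_two_step _ _ _ adj_ba adj_ad) eqxx.
Qed.

Theorem mainTheorem7 (T : finType) (e : rel T) :
  simple_graph e -> graph_connected e -> 3 <= #|T| ->
  (forall v : T, #|T| <= 2 * degree e v) ->
  forall k : nat, 3 <= k <= #|T| -> proper_index_is e k 2.
Proof.
move=> [e_sym e_irr] e_conn n3 dirac k /andP[k3 kn].
have [x0 _] : exists x0, x0 \in T by apply/card_gt0P; exact: leq_trans n3.
have [x [p [xp up cover]]] := hamiltonian_path e_sym e_irr dirac e_conn x0.
split.
  exists (parity_coloring x p); split; first exact: parity_coloring_sym.
  move=> S _; exists setT, (path_edges x p); split; first exact: subsetT.
    exact: path_edges_tree.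
  exact: parity_coloring_proper cover.
case=> [|[|m']] // _ c _ c_proper; first by case: (c x x).
have [S cardS] := exists_card_set kn.
have [V [F [SV tree proper]]] := c_proper S cardS.
have := subset_leq_card SV; have := one_color_subtree_small tree proper.
by rewrite cardS; lia.
Qed.
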